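(* For any $f\in LC(O,K)$, any integers $m\ge0$, $n\ge0$, and any $x\in O$, $$\big((\Delta-[m]I)^nf\big)(x)=\sum_{i=0}^n\sum_{j=i}^n(-1)^{n-i}\binom{n}{j}[m]^{n-j}f(T^ix)\,\mathcal{D}_i(T^j).$$
   Context: Let $q$ be a prime power, $K=\mathbf{F}_q((T))$, $O=\mathbf{F}_q[[T]]$, and $LC(O,K)$ the space of continuous $\mathbf{F}_q$-linear functions $O\to K$. Put $[m]=T^{q^m}-T$ (so $[0]=0$). Hasse derivatives: $\mathcal{D}_n(\sum_ia_iT^i)=\sum_i\binom{i}{n}a_iT^{i-n}$ (binomials in $\mathbf{F}_q$). The Carlitz difference operator $\Delta$ on $LC(O,K)$ is $(\Delta f)(x)=f(Tx)-Tf(x)$, and $I$ is the identity operator; $\binom{n}{j}$ is read in $\mathbf{F}_q$. *)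

From HB Require Import structures.
From mathcomp Require Import all_boot all_order all_algebra.
From mathcomp Require Import boolp.
From Stdlib Require Import ProofIrrelevance FunctionalExtensionality.
Set Implicit Arguments. Unset Strict Implicit. Unset Printing Implicit Defensive.
Import Order.TTheory GRing.Theory Num.Theory.
Local Open Scope ring_scope.

Section Series.
Variable F : fieldType.

(* O = F[[T]] : formal power series, given by coefficient functions. *)
Record pser := PSer { pcoef : nat -> F }.

Definition addO (a b : pser) := PSer (fun k => pcoef a k + pcoef b k).
Definition scaleO (c : F) (a : pser) := PSer (fun k => c * pcoef a k).
Definition oneO := PSer (fun k => (k == 0%N)%:R).
Definition TO := PSer (fun k => (k == 1%N)%:R).
Definition mulO (a b : pser) :=
  PSer (fun k => \sum_(i < k.+1) pcoef a i * pcoef b (k - i)).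
Definition expO (a : pser) (n : nat) := iter n (mulO a) oneO.

(* K = F((T)) : formal Laurent series = coefficient functions Z -> F with
   support bounded below. *)
Definition laurent_pred (a : int -> F) := exists N : int, forall k, k < N -> a k = 0.
Record lser := MkL { lcoef : int -> F; lcoefP : laurent_pred lcoef }.

Lemma lser_ext (a b : lser) : lcoef a =1 lcoef b -> a = b.
Proof.
case: a b => a Pa [b Pb] /= /functional_extensionality eab.
subst b; congr MkL; exact: proof_irrelevance.
Qed.

Definition lbound (a : lser) : int := projT1 (cid (lcoefP a)).
Lemma lboundP (a : lser) k : k < lbound a -> lcoef a k = 0.
Proof. rewrite /lbound; case: cid => N HN /=; exact: HN. Qed.

Lemma zeroL_pred : laurent_pred (fun _ => 0).
Proof. by exists 0. Qed.
Definition zeroL := MkL zeroL_pred.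

Lemma addL_pred (a b : lser) : laurent_pred (fun k => lcoef a k + lcoef b k).
Proof.
exists (Num.min (lbound a) (lbound b)) => k hk.
rewrite !lboundP ?addr0 //.
  by apply: (lt_le_trans hk); rewrite ge_min lexx orbT.
by apply: (lt_le_trans hk); rewrite ge_min lexx.
Qed.
Definition addL a b := MkL (addL_pred a b).

Lemma oppL_pred (a : lser) : laurent_pred (fun k => - lcoef a k).
Proof. by exists (lbound a) => k hk; rewrite lboundP ?oppr0. Qed.
Definition oppL a := MkL (oppL_pred a).

Lemma scaleL_pred (c : F) (a : lser) : laurent_pred (fun k => c * lcoef a k).
Proof. by exists (lbound a) => k hk; rewrite lboundP ?mulr0. Qed.
Definition scaleL c a := MkL (scaleL_pred c a).

Lemma addLA : associative addL.
Proof. by move=> a b c; apply: lser_ext => k /=; rewrite addrA. Qed.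
Lemma addLC : commutative addL.
Proof. by move=> a b; apply: lser_ext => k /=; rewrite addrC. Qed.
Lemma add0L : left_id zeroL addL.
Proof. by move=> a; apply: lser_ext => k /=; rewrite add0r. Qed.
Lemma addNL : left_inverse zeroL oppL addL.
Proof. by move=> a; apply: lser_ext => k /=; rewrite addNr. Qed.

HB.instance Definition _ := gen_eqMixin lser.
HB.instance Definition _ := gen_choiceMixin lser.
HB.instance Definition _ := GRing.isZmodule.Build lser addLA addLC add0L addNL.

(* Cauchy product of Laurent series: the coefficient of T^k is
   sum_{i} a_i b_{k-i}, a finite sum over lbound a <= i <= k - lbound b. *)
Definition mulL_coef (a b : lser) (k : int) : F :=
  let Na := lbound a in let Nb := lbound b in
  if Na + Nb <= k then
    \sum_(j < (absz (k - Na - Nb)%R).+1) lcoef a (Na + j%:Z) * lcoef b (k - Na - j%:Z)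
  else 0.
Lemma mulL_pred (a b : lser) : laurent_pred (mulL_coef a b).
Proof.
exists (lbound a + lbound b) => k hk; rewrite /mulL_coef.
by rewrite leNgt hk.
Qed.
Definition mulL a b := MkL (mulL_pred a b).

Lemma polyL_pred (p : int -> F) : laurent_pred (fun k => if k is Posz n then p k else 0).
Proof. by exists 0 => -[n|n] //=; rewrite ltNge. Qed.

Definition oneL := MkL (polyL_pred (fun k => (k == 0)%:R)).
Definition TL := MkL (polyL_pred (fun k => (k == 1)%:R)).
Definition expL (a : lser) (n : nat) := iter n (mulL a) oneL.

Lemma ofO_pred (a : pser) :
  laurent_pred (fun k => if k is Posz n then pcoef a n else 0).
Proof. by exists 0 => -[n|n] //=; rewrite ltNge. Qed.
Definition ofO (a : pser) := MkL (ofO_pred a).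

(* Generalised binomial coefficient binom(i, n) for i in Z, n in N:
   i (i-1) ... (i-n+1) / n!. *)
Definition binomZ (i : int) (n : nat) : int :=
  match i with
  | Posz m => ('C(m, n))%:Z
  | Negz m => (-1) ^+ n * ('C(n + m, n))%:Z   (* i = -(m+1) *)
  end.

(* Hasse derivative: D_n (sum_i a_i T^i) = sum_i binom(i,n) a_i T^(i-n). *)
Lemma hasseD_pred (n : nat) (a : lser) :
  laurent_pred (fun k => (binomZ (k + n%:Z) n)%:~R * lcoef a (k + n%:Z)).
Proof.
exists (lbound a - n%:Z) => k hk; rewrite lboundP ?mulr0 //.
by rewrite -ltrBrDr.
Qed.
Definition hasseD (n : nat) (a : lser) := MkL (hasseD_pred n a).

(* Topology: T-adic; agreement of the coefficients below a given degree. *)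
Definition O_close (M : nat) (x y : pser) := forall k, (k < M)%N -> pcoef x k = pcoef y k.
Definition K_close (N : int) (u v : lser) := forall k, k < N -> lcoef u k = lcoef v k.

Definition continuousOK (f : pser -> lser) :=
  forall x : pser, forall N : int, exists M : nat,
    forall y : pser, O_close M x y -> K_close N (f x) (f y).
Definition linearOK (f : pser -> lser) :=
  (forall x y, f (addO x y) = f x + f y) /\
  (forall (c : F) x, f (scaleO c x) = scaleL c (f x)).
Definition LC (f : pser -> lser) := continuousOK f /\ linearOK f.

Definition Delta (f : pser -> lser) : pser -> lser :=
  fun x => f (mulO TO x) - mulL TL (f x).

End Series.

Definition bracket (F : finFieldType) (m : nat) : lser F :=
  expL (TL F) (#|F| ^ m)%N - TL F.

Definition DeltaM (F : finFieldType) (m : nat) (f : pser F -> lser F) :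
  pser F -> lser F :=
  fun x => Delta f x - mulL (bracket F m) (f x).

(* Write S for the shift (S g)(x) = g(T x) and c = -([m] + T).  Then
   Delta - [m]I is g |-> S g + c g, and S commutes with multiplication by the
   constant c, so the induction proving the binomial theorem gives
   (Delta - [m]I)^n f = sum_k C(n,k) c^(n-k) S^k f.  Expanding
   c^(n-k) = (-1)^(n-k) ([m] + T)^(n-k) binomially and using
   D_i(T^j) = C(j,i) T^(j-i) and C(n,i) C(n-i,l) = C(n,i+l) C(i+l,i) yields the
   double sum.

   Most of the work is making F((T)) a commutative ring: the coefficient of T^k
   in a b is sum_i a_i b_(k-i) over any window of indices i covering the
   supports, so the ring axioms reduce to reindexing finite sums. *)

From HB Require Import structures.
From mathcomp Require Import all_boot all_order all_algebra.
From mathcomp Require Import zify ring.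
From Stdlib Require Import FunctionalExtensionality.
Set Implicit Arguments. Unset Strict Implicit. Unset Printing Implicit Defensive.
Import Order.TTheory GRing.Theory Num.Theory.
Local Open Scope ring_scope.

Lemma sum_ord_delta (R : pzSemiRingType) N i (g : nat -> R) :
  \sum_(j < N) (j == i :> nat)%:R * g j = if (i < N)%N then g i else 0.
Proof.
rewrite -[RHS](@big_ord1_eq R 0 +%R g i N) [RHS]big_mkcond /=; apply: eq_bigr => j _.
by case: eqP => _; rewrite ?mul1r ?mul0r.
Qed.

Section LaurentRing.
Variable F : fieldType.
Local Notation L := (lser F).

Definition zero_below (a : L) (N : int) := forall k, k < N -> lcoef a k = 0.

Lemma zero_below_lbound a : zero_below a (lbound a). Proof. exact: lboundP. Qed.
Arguments zero_below_lbound : clear implicits.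

Lemma zero_below_le a M M' : zero_below a M -> M' <= M -> zero_below a M'.
Proof. by move=> h le k hk; apply: h; exact: lt_le_trans hk le. Qed.

Lemma zero_below_max a M M' :
  zero_below a M -> zero_below a M' -> zero_below a (Num.max M M').
Proof. by move=> h h' k; rewrite lt_max => /orP[/h|/h']. Qed.

Definition conv (a b : L) (l : int) (N : nat) (k : int) : F :=
  \sum_(j < N) lcoef a (l + j%:Z) * lcoef b (k - l - j%:Z).

Lemma conv0 a b l k : conv a b l 0 k = 0.
Proof. exact: big_ord0. Qed.

Lemma conv_widen a b Lb l N d k : zero_below b Lb -> k - l - Lb < N%:Z ->
  conv a b l (N + d) k = conv a b l N k.
Proof.
move=> hb hN; rewrite /conv big_split_ord /= [X in _ + X]big1 ?addr0 // => j _.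
by rewrite hb ?mulr0 //; lia.
Qed.

Lemma conv_shift a b l d N k : zero_below a (l + d%:Z) ->
  conv a b l (d + N) k = conv a b (l + d%:Z) N k.
Proof.
move=> ha; rewrite /conv big_split_ord /= big1 ?add0r => [|j _].
  by apply: eq_bigr => j _; congr (lcoef _ _ * lcoef _ _); lia.
by rewrite ha ?mul0r //; have := ltn_ord j; lia.
Qed.

Lemma conv_window a b La Lb l l' N N' k :
  zero_below a La -> zero_below b Lb -> l <= La -> l' <= La ->
  k - l - Lb < N%:Z -> k - l' - Lb < N'%:Z ->
  conv a b l N k = conv a b l' N' k.
Proof.
move=> ha hb.
wlog le_l'l : l l' N N' / l' <= l.
  move=> H hl hl' hN hN'; case: (lerP l' l) => le; first exact: H.
  by symmetry; apply: H => //; exact: ltW.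
move=> hl hl' hN hN'; pose d := absz (l - l').
have l_eq : l = l' + d%:Z by rewrite /d; lia.
rewrite l_eq -conv_shift -?l_eq; last by apply: (zero_below_le ha); lia.
rewrite -(conv_widen _ N' hb) -?l_eq; last lia.
by rewrite -[in RHS](conv_widen _ (d + N) hb) // addnC.
Qed.

Lemma lcoef_mulL a b La Lb l N k :
  zero_below a La -> zero_below b Lb -> l <= La -> k - l - Lb < N%:Z ->
  lcoef (mulL a b) k = conv a b l N k.
Proof.
move=> ha hb hl hN.
have ha' := zero_below_max ha (zero_below_lbound a).
have hb' := zero_below_max hb (zero_below_lbound b).
rewrite /= /mulL_coef; case: ifP => hk.
  by apply: (conv_window ha' hb'); lia.
by rewrite (conv_window ha' hb' (l' := Num.max La (lbound a)) (N' := 0)) ?conv0 //; lia.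
Qed.

Lemma zero_below_mulL a b La Lb :
  zero_below a La -> zero_below b Lb -> zero_below (mulL a b) (La + Lb).
Proof.
by move=> ha hb k hk; rewrite (lcoef_mulL (N := 0) ha hb (lexx La)) ?conv0 //; lia.
Qed.

Lemma lcoef_oneL k : lcoef (oneL F) k = (k == 0)%:R.
Proof. by case: k. Qed.

Lemma lcoef_TL k : lcoef (TL F) k = (k == 1)%:R.
Proof. by case: k. Qed.

Lemma zero_below_oneL : zero_below (oneL F) 0.
Proof. by move=> k hk; rewrite lcoef_oneL; case: eqP => // e; move: hk; rewrite e. Qed.

Lemma zero_below_TL : zero_below (TL F) 0.
Proof. by move=> k hk; rewrite lcoef_TL; case: eqP => // e; move: hk; rewrite e. Qed.

Lemma mulLC : commutative (@mulL F).
Proof.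
move=> a b; apply: lser_ext => k.
pose l := Num.min (lbound a) (lbound b).
have ha : zero_below a l by apply: (zero_below_le (zero_below_lbound a)); lia.
have hb : zero_below b l by apply: (zero_below_le (zero_below_lbound b)); lia.
case: (ltP k (l + l)) => hk; first by rewrite (zero_below_mulL ha hb) ?(zero_below_mulL hb ha).
pose N := (absz (k - l - l)%R).+1.
rewrite (lcoef_mulL (N := N) ha hb (lexx l)); last lia.
rewrite (lcoef_mulL (N := N) hb ha (lexx l)); last lia.
rewrite /conv (reindex_inj rev_ord_inj) /=; apply: eq_bigr => j _.
by rewrite mulrC; congr (lcoef _ _ * lcoef _ _); have := ltn_ord j; lia.
Qed.

Lemma mul1L : left_id (oneL F) (@mulL F).
Proof.
move=> a; apply: lser_ext => k; pose N := (absz (k - lbound a)%R).+1.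
rewrite (lcoef_mulL (N := N) zero_below_oneL (zero_below_lbound a) (lexx 0)); last lia.
rewrite /conv (eq_bigr (fun j : 'I_N => (j == 0%N :> nat)%:R * lcoef a (k - j%:Z))).
  by rewrite (sum_ord_delta N 0 (fun j => lcoef a (k - j%:Z))) subr0.
by move=> j _; rewrite add0r lcoef_oneL eqz_nat subr0.
Qed.

Lemma mulLDl : left_distributive (@mulL F) (@addL F).
Proof.
move=> a b c; apply: lser_ext => k.
pose l := Num.min (lbound a) (lbound b).
have ha : zero_below a l by apply: (zero_below_le (zero_below_lbound a)); lia.
have hb : zero_below b l by apply: (zero_below_le (zero_below_lbound b)); lia.
have hab : zero_below (addL a b) l by move=> k' hk'; rewrite /= ha ?hb ?addr0.
have hc := zero_below_lbound c.
pose N := (absz (k - l - lbound c)%R).+1.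
transitivity (lcoef (mulL a c) k + lcoef (mulL b c) k); last by [].
rewrite (lcoef_mulL (N := N) hab hc (lexx l)); last lia.
rewrite (lcoef_mulL (N := N) ha hc (lexx l)); last lia.
rewrite (lcoef_mulL (N := N) hb hc (lexx l)); last lia.
by rewrite /conv -big_split; apply: eq_bigr => j _; rewrite /= mulrDl.
Qed.

Lemma mulLA : associative (@mulL F).
Proof.
move=> a b c; apply: lser_ext => k.
pose l := Num.min (lbound a) (Num.min (lbound b) (lbound c)).
have ha : zero_below a l by apply: (zero_below_le (zero_below_lbound a)); lia.
have hb : zero_below b l by apply: (zero_below_le (zero_below_lbound b)); lia.
have hc : zero_below c l by apply: (zero_below_le (zero_below_lbound c)); lia.
pose N := (absz (k - l - l - l)%R).+1.
rewrite (lcoef_mulL (N := N) (zero_below_mulL ha hb) hc (lexx (l + l))); last lia.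
rewrite (lcoef_mulL (N := N) ha (zero_below_mulL hb hc) (lexx l)); last lia.
rewrite /conv.
under eq_bigr => u _.
  rewrite (lcoef_mulL (l := l - u%:Z) (N := N) hb hc); [|lia|lia].
  rewrite /conv mulr_sumr.
over.
under [RHS]eq_bigr => j _.
  rewrite (lcoef_mulL (N := N) ha hb (lexx l)); last by have := ltn_ord j; lia.
  rewrite /conv mulr_suml.
over.
rewrite exchange_big; apply: eq_bigr => j _; apply: eq_bigr => u _.
by rewrite mulrA; congr (lcoef _ _ * lcoef _ _ * lcoef _ _); lia.
Qed.

Lemma oneL_neq0 : oneL F != 0.
Proof.
by apply/eqP => /(congr1 (fun a => lcoef a 0)); rewrite lcoef_oneL /= => /eqP; rewrite oner_eq0.
Qed.

End LaurentRing.
Arguments zero_below_lbound {F} a.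

HB.instance Definition _ (F : fieldType) := GRing.Zmodule_isComNzRing.Build
  (lser F) (@mulLA F) (@mulLC F) (@mul1L F) (@mulLDl F) (@oneL_neq0 F).

Section LaurentIdentities.
Variable F : fieldType.
Local Notation L := (lser F).

Lemma mulLE (a b : L) : mulL a b = a * b. Proof. by []. Qed.

Lemma expLE (a : L) n : expL a n = a ^+ n.
Proof. by elim: n => [|n IH] //; rewrite exprS -IH. Qed.

Lemma lcoefMn (a : L) n k : lcoef (a *+ n) k = lcoef a k *+ n.
Proof. by elim: n => [|n IH] //; rewrite !mulrS -IH. Qed.

Lemma lcoef_mulTL (a : L) k : lcoef (TL F * a) k = lcoef a (k - 1).
Proof.
pose N := (absz (k - lbound a)%R).+2.
rewrite -mulLE (lcoef_mulL (N := N) (@zero_below_TL F) (zero_below_lbound a) (lexx 0)); last lia.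
rewrite /conv (eq_bigr (fun j : 'I_N => (j == 1%N :> nat)%:R * lcoef a (k - j%:Z))).
  by rewrite (sum_ord_delta N 1 (fun j => lcoef a (k - j%:Z))).
by move=> j _; rewrite add0r lcoef_TL eqz_nat subr0.
Qed.

Lemma lcoef_TLn j k : lcoef (TL F ^+ j) k = (k == j%:Z)%:R.
Proof.
elim: j k => [|j IH] k; first by rewrite expr0 lcoef_oneL.
by rewrite exprS lcoef_mulTL IH; congr (_%:R); apply/eqP/eqP; lia.
Qed.

Lemma hasseD_TLn i j : (i <= j)%N ->
  hasseD i (TL F ^+ j) = 'C(j, i)%:R * TL F ^+ (j - i).
Proof.
move=> le_ij; apply: lser_ext => k.
transitivity ((binomZ (k + i%:Z) i)%:~R * lcoef (TL F ^+ j) (k + i%:Z)); first by [].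
rewrite mulr_natl lcoefMn !lcoef_TLn.
have [e|ne] := eqVneq (k + i%:Z) j%:Z.
  have -> : k == (j - i)%N%:Z by apply/eqP; lia.
  by rewrite e /= -pmulrn mulr1.
have -> : (k == (j - i)%N%:Z) = false by apply/eqP; lia.
by rewrite mulr0 mul0rn.
Qed.

Lemma scaleL_signMn e n (a : L) : scaleL ((-1) ^+ e * n%:R) a = ((-1) ^+ e * a) *+ n.
Proof.
apply: lser_ext => k; rewrite lcoefMn -signr_odd -[in RHS]signr_odd.
transitivity ((-1) ^+ odd e * lcoef a k *+ n); first by rewrite /= -mulrA mulr_natl mulrnAr.
by case: (odd e); rewrite ?expr1 ?expr0 ?mulN1r ?mul1r.
Qed.

End LaurentIdentities.

Section PowerSeriesShift.
Variable F : fieldType.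
Local Notation O := (pser F).

Lemma pser_ext (a b : O) : pcoef a =1 pcoef b -> a = b.
Proof. by case: a b => a [b] /= /functional_extensionality ->. Qed.

Lemma pcoef_mulTO (a : O) k :
  pcoef (mulO (TO F) a) k = if k is k'.+1 then pcoef a k' else 0.
Proof.
transitivity (\sum_(u < k.+1) (u == 1%N :> nat)%:R * pcoef a (k - u)); first by [].
by rewrite (sum_ord_delta k.+1 1 (fun u => pcoef a (k - u))); case: k => [|k] //=; rewrite subn1.
Qed.

Lemma pcoef_expTO i k : pcoef (expO (TO F) i) k = (k == i)%:R.
Proof.
elim: i k => [|i IH] k //.
by rewrite [expO _ _.+1]/= pcoef_mulTO; case: k => [|k] //=; rewrite IH.
Qed.

Lemma pcoef_mulO_expTO i (a : O) k :
  pcoef (mulO (expO (TO F) i) a) k = if (i <= k)%N then pcoef a (k - i) else 0.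
Proof.
transitivity (\sum_(u < k.+1) pcoef (expO (TO F) i) u * pcoef a (k - u)); first by [].
by under eq_bigr do rewrite pcoef_expTO; rewrite (sum_ord_delta k.+1 i (fun u => pcoef a (k - u))).
Qed.

Lemma mulO_expTO0 (a : O) : mulO (expO (TO F) 0) a = a.
Proof. by apply: pser_ext => k; rewrite pcoef_mulO_expTO subn0. Qed.

Lemma mulTO_expTO i (a : O) :
  mulO (TO F) (mulO (expO (TO F) i) a) = mulO (expO (TO F) i.+1) a.
Proof.
apply: pser_ext => k; rewrite pcoef_mulTO.
by case: k => [|k]; rewrite !pcoef_mulO_expTO // ltnS subSS.
Qed.

End PowerSeriesShift.

Lemma binomial_shift (R : comPzRingType) (c : R) (g : nat -> nat -> R) :
  (forall n i, g n.+1 i = g n i.+1 + c * g n i) ->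
  forall n i, g n i = \sum_(k < n.+1) (c ^+ (n - k) * g 0%N (i + k)%N) *+ 'C(n, k).
Proof.
move=> gS; elim=> [|n IH] i; first by rewrite big_ord1 expr0 mul1r addn0.
rewrite gS !IH mulr_sumr [RHS]big_ord_recl bin0 subn0 addn0.
under [X in _ = _ + X]eq_bigr => k _ do rewrite lift0 subSS binS mulrnDr addnS.
rewrite big_split [in RHS]addrA [RHS]addrC; congr (_ + _).
rewrite [LHS]big_ord_recl [X in _ = _ + X]big_ord_recr (bin_small (ltnSn n)) /=.
rewrite mulr0n addr0 bin0 subn0 addn0 mulrnAr mulrA -exprS; congr (_ + _).
apply: eq_bigr => k _; rewrite /bump add1n mulrnAr mulrA -exprS addnS.
by rewrite subnS prednK // subn_gt0.
Qed.

Lemma mul_bin_nested n i l : (i + l <= n)%N ->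
  ('C(n, i) * 'C(n - i, l) = 'C(n, i + l) * 'C(i + l, i))%N.
Proof.
move=> le_n; have le_i : (i <= n)%N by lia.
have le_l : (l <= n - i)%N by lia.
apply/eqP; rewrite -(@eqn_pmul2r (i`! * l`! * (n - i - l)`!)) ?muln_gt0 ?fact_gt0 //.
apply/eqP; transitivity n`!.
  by rewrite -(bin_fact le_i) -(bin_fact le_l); ring.
have f_il := bin_fact (leq_addr l i); rewrite addKn in f_il.
by rewrite -(bin_fact le_n) -f_il subnDA; ring.
Qed.

Section CarlitzOperator.
Variables (F : finFieldType) (m : nat).
Local Notation c := (- (bracket F m + TL F)).

Lemma DeltaME (g : pser F -> lser F) x : DeltaM m g x = g (mulO (TO F) x) + c * g x.
Proof. by rewrite /DeltaM /Delta !mulLE; ring. Qed.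

Lemma iter_DeltaM n f x : iter n (DeltaM m) f x =
  \sum_(k < n.+1) (c ^+ (n - k) * f (mulO (expO (TO F) k) x)) *+ 'C(n, k).
Proof.
pose g k i := iter k (DeltaM m) f (mulO (expO (TO F) i) x).
have gS k i : g k.+1 i = g k i.+1 + c * g k i by rewrite /g iterS DeltaME mulTO_expTO.
by transitivity (g n 0); [rewrite /g mulO_expTO0 | rewrite (binomial_shift gS)].
Qed.

End CarlitzOperator.

Theorem corollary9 (F : finFieldType) (f : pser F -> lser F) (hf : LC f)
  (m n : nat) (x : pser F) :
  iter n (DeltaM m) f x =
  \sum_(0 <= i < n.+1) \sum_(i <= j < n.+1)
     scaleL ((-1) ^+ (n - i) * ('C(n, j))%:R)
       (mulL (mulL (expL (bracket F m) (n - j)) (f (mulO (expO (TO F) i) x)))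
             (hasseD i (expL (TL F) j))).
Proof.
rewrite iter_DeltaM big_mkord; apply: eq_bigr => -[i le_in] _ /=.
set y := f _.
under eq_big_nat => j /andP[le_ij _] do rewrite scaleL_signMn !mulLE !expLE hasseD_TLn //.
rewrite (big_addn 0 n.+1 i) big_mkord subSn // [in LHS]exprNn exprDn.
rewrite mulr_sumr mulr_suml -sumrMnl; apply: eq_bigr => -[l lt_l] _ /=.
rewrite addnK (addnC l i) subnDA.
have le_n : (i + l <= n)%N by lia.
rewrite mulrnAr mulrnAl -mulrnA mulr_natl !mulrnAr -mulrnA.
rewrite [in LHS]mulnC mul_bin_nested // [in RHS]mulnC.
by congr (_ *+ _); rewrite -!mulrA [y * _]mulrC.
Qed.
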